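(* The worst-case time complexity of the Gay–Hole subtyping algorithm described in the context, run on input $(T,U)$, is $O(n^{n^3})$, where $n = |T| + |U|$.
   Context: Session types are given by the grammar $T ::= \mathsf{end} \mid X \mid \mu X.T \mid {?}[T_1,\dots,T_n].S \mid {!}[T_1,\dots,T_n].S \mid \&\langle l_1:T_1,\dots,l_n:T_n\rangle \mid \oplus\langle l_1:T_1,\dots,l_n:T_n\rangle$ (input, output, branch, select); the inputs $T,U$ are closed types, types are identified up to $\alpha$-conversion and substitutions are capture-avoiding. The size $|T|$ is the number of constructors: $|\mathsf{end}| = |X| = 1$, $|\mu X.T| = 1 + |T|$, $|\&\langle l_i:T_i\rangle_{i}| = |\oplus\langle l_i:T_i\rangle_{i}| = 1 + \sum_{i} |T_i|$, $|{?}[T_1,\dots,T_n].S| = |{!}[T_1,\dots,T_n].S| = 1 + \sum_i|T_i| + |S|$. Judgements have the form $\Sigma \vdash T \le U$, where $\Sigma$ is a finite set of pairs $V \le W$ of types. The algorithmic rules are: (AS-Assump) $\Sigma \vdash T\le U$ holds if $T \le U \in \Sigma$; (AS-End) $\Sigma \vdash \mathsf{end}\le\mathsf{end}$; (AS-RecL) from $\Sigma \cup\{\mu X.T \le U\} \vdash T[\mu X.T/X] \le U$ infer $\Sigma \vdash \mu X.T \le U$; (AS-RecR) from $\Sigma\cup\{T \le \mu X.U\} \vdash T \le U[\mu X.U/X]$ infer $\Sigma \vdash T \le \mu X.U$; (AS-In) from $\Sigma \vdash T_i \le U_i$ for all $i$ and $\Sigma \vdash V \le W$ infer $\Sigma \vdash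 {?}[T_1,\dots,T_k].V \le {?}[U_1,\dots,U_k].W$; (AS-Out) from $\Sigma \vdash U_i \le T_i$ for all $i$ and $\Sigma \vdash V \le W$ infer $\Sigma \vdash {!}[T_1,\dots,T_k].V \le {!}[U_1,\dots,U_k].W$; (AS-Bra) if $m\le n$ and $\Sigma \vdash S_i \le T_i$ for $1\le i\le m$ infer $\Sigma \vdash \&\langle l_i:S_i\rangle_{1\le i\le m} \le \&\langle l_i:T_i\rangle_{1\le i\le n}$; (AS-Sel) if $m\le n$ and $\Sigma \vdash S_i \le T_i$ for $1\le i\le m$ infer $\Sigma \vdash \oplus\langle l_i:S_i\rangle_{1\le i\le n} \le \oplus\langle l_i:T_i\rangle_{1\le i\le m}$. The Gay–Hole algorithm decides whether $T$ is a subtype of $U$ by attempting to build a derivation of $\emptyset \vdash T \le U$ bottom-up: at each judgement it applies the applicable rule, with AS-Assump taking highest priority and AS-RecL preferred over AS-RecR when both apply (the remaining rules apply to disjoint sets of judgements), recursively processing all premises; it fails if some judgement matches no rule. *)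

From Stdlib Require List.
From mathcomp Require Import all_boot.
Set Implicit Arguments. Unset Strict Implicit. Unset Printing Implicit Defensive.

(** Session types, with de Bruijn indices for type variables, so that types
    are identified up to alpha-conversion by construction. Labels are nats. *)
Inductive ty : Type :=
  | TEnd : ty
  | TVar : nat -> ty
  | TRec : ty -> ty                          (* mu X. T, X = index 0 *)
  | TIn  : list ty -> ty -> ty
  | TOut : list ty -> ty -> ty
  | TBra : list (nat * ty) -> ty
  | TSel : list (nat * ty) -> ty.

Fixpoint size_ty (t : ty) : nat :=
  match t with
  | TEnd => 1
  | TVar _ => 1
  | TRec t => 1 + size_ty t
  | TIn ts s => 1 + sumn (map size_ty ts) + size_ty s
  | TOut ts s => 1 + sumn (map size_ty ts) + size_ty s
  | TBra bs => 1 + sumn (map (fun p => size_ty p.2) bs)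
  | TSel bs => 1 + sumn (map (fun p => size_ty p.2) bs)
  end.

Fixpoint wf (d : nat) (t : ty) : bool :=
  match t with
  | TEnd => true
  | TVar n => n < d
  | TRec t => wf d.+1 t
  | TIn ts s => all (wf d) ts && wf d s
  | TOut ts s => all (wf d) ts && wf d s
  | TBra bs => all (fun p => wf d p.2) bs
  | TSel bs => all (fun p => wf d p.2) bs
  end.

Definition closed_ty (t : ty) : bool := wf 0 t.

Fixpoint lift (c : nat) (t : ty) : ty :=
  match t with
  | TEnd => TEnd
  | TVar n => if c <= n then TVar n.+1 else TVar n
  | TRec t => TRec (lift c.+1 t)
  | TIn ts s => TIn (map (lift c) ts) (lift c s)
  | TOut ts s => TOut (map (lift c) ts) (lift c s)
  | TBra bs => TBra (map (fun p => (p.1, lift c p.2)) bs)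
  | TSel bs => TSel (map (fun p => (p.1, lift c p.2)) bs)
  end.

Fixpoint subst (k : nat) (u : ty) (t : ty) : ty :=
  match t with
  | TEnd => TEnd
  | TVar n => if n == k then u else if k < n then TVar n.-1 else TVar n
  | TRec t => TRec (subst k.+1 (lift 0 u) t)
  | TIn ts s => TIn (map (subst k u) ts) (subst k u s)
  | TOut ts s => TOut (map (subst k u) ts) (subst k u s)
  | TBra bs => TBra (map (fun p => (p.1, subst k u p.2)) bs)
  | TSel bs => TSel (map (fun p => (p.1, subst k u p.2)) bs)
  end.

Definition unfold_body (t : ty) : ty := subst 0 (TRec t) t.

Definition is_rec (t : ty) : bool := if t is TRec _ then true else false.

(** Premises of the structural rules AS-End, AS-In, AS-Out, AS-Bra, AS-Sel
    (in order); None if none of them applies to T <= U. *)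
Definition struct_premises (T U : ty) : option (list (ty * ty)) :=
  match T, U with
  | TEnd, TEnd => Some [::]
  | TIn ts v, TIn us w =>
      if size ts == size us then Some (zip ts us ++ [:: (v, w)]) else None
  | TOut ts v, TOut us w =>
      if size ts == size us then Some (zip us ts ++ [:: (v, w)]) else None
  | TBra ss, TBra ts =>
      if (size ss <= size ts) && (map fst ss == take (size ss) (map fst ts))
      then Some (zip (map snd ss) (map snd ts)) else None
  | TSel ss, TSel ts =>
      if (size ts <= size ss) && (map fst ts == take (size ts) (map fst ss))
      then Some (zip (map snd ss) (map snd ts)) else None
  | _, _ => None
  end.

(** Execution of the Gay-Hole algorithm: [exec S T U b k] means that processing
    the judgement S |- T <= U terminates with result b (true = success,
    false = failure) after processing k judgements in total (cost model:
    one unit per judgement processed). AS-Assump has top priority, then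
    AS-RecL, then AS-RecR, then the (mutually exclusive) structural rules;
    all premises are processed recursively, each under the same Sigma. *)
Inductive exec : list (ty * ty) -> ty -> ty -> bool -> nat -> Prop :=
  | ExAssump S T U :
      List.In (T, U) S -> exec S T U true 1
  | ExRecL S T' U b k :
      ~ List.In (TRec T', U) S ->
      exec ((TRec T', U) :: S) (unfold_body T') U b k ->
      exec S (TRec T') U b k.+1
  | ExRecR S T U' b k :
      ~ List.In (T, TRec U') S -> ~~ is_rec T ->
      exec ((T, TRec U') :: S) T (unfold_body U') b k ->
      exec S T (TRec U') b k.+1
  | ExStruct S T U ps b k :
      ~ List.In (T, U) S -> ~~ is_rec T -> ~~ is_rec U ->
      struct_premises T U = Some ps ->
      execs S ps b k ->
      exec S T U b k.+1
  | ExFail S T U :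
      ~ List.In (T, U) S -> ~~ is_rec T -> ~~ is_rec U ->
      struct_premises T U = None ->
      exec S T U false 1
with execs : list (ty * ty) -> list (ty * ty) -> bool -> nat -> Prop :=
  | ExsNil S : execs S [::] true 0
  | ExsCons S A B ps b1 k1 b2 k2 :
      exec S A B b1 k1 -> execs S ps b2 k2 ->
      execs S ((A, B) :: ps) (b1 && b2) (k1 + k2).

From mathcomp Require Import all_boot zify.
From Stdlib Require Import Classical_Prop.
Set Implicit Arguments. Unset Strict Implicit.

(** Every judgement met by the algorithm relates two members of the closure [C]
    of {T, U} under taking components (immediate subterms, and the unfolding of
    a recursive type); [C] has at most n members, each with fewer than n
    components.  A judgement with a recursive side that is not yet assumed
    pushes onto Sigma a new pair of [C] with a recursive side, and there are at
    most |C|^2 such pairs.  Between two pushes, the structural rules strictly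
    decrease the rank of a judgement, i.e. the number of members of [C] smaller
    than its larger side.  Hence the budget |C| * (number of pairs still
    available) + rank is initially at most |C|^3 <= n^3 and decreases along
    every edge of the derivation; as every node has fewer than n premises, a
    judgement of budget e is processed in at most n^e steps. *)

Lemma map_ext_In (A B : Type) (f g : A -> B) (s : seq A) :
  (forall x, List.In x s -> f x = g x) -> map f s = map g s.
Proof. exact: List.map_ext_in. Qed.

Lemma map_id_In (A : Type) (f : A -> A) (s : seq A) :
  (forall x, List.In x s -> f x = x) -> map f s = s.
Proof. by move=> fE; rewrite -[RHS]map_id; exact: map_ext_In. Qed.

Lemma In_flatten_map (A B : Type) (f : A -> seq B) (s : seq A) y :
  List.In y (flatten (map f s)) <-> exists2 x, List.In x s & List.In y (f x).
Proof.
rewrite List.in_concat; split=> [[l [/List.in_map_iff [x [<- xs]] yl]] | [x xs yfx]].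
  by exists x.
by exists (f x); split=> //; apply: List.in_map.
Qed.

Lemma leq_sumn_map (A : Type) (f g : A -> nat) (s : seq A) :
  (forall x, List.In x s -> f x <= g x) -> sumn (map f s) <= sumn (map g s).
Proof.
elim: s => //= x s IH fg; apply: leq_add; first exact/fg/or_introl.
by apply: IH => y ys; apply/fg/or_intror.
Qed.

Lemma In_leq_sumn (A : Type) (f : A -> nat) (s : seq A) x :
  List.In x s -> f x <= sumn (map f s).
Proof. by elim: s => //= y s IH [<-|/IH]; lia. Qed.

Lemma size_leq_sumn (A : Type) (f : A -> nat) (s : seq A) :
  (forall x, 0 < f x) -> size s <= sumn (map f s).
Proof. by move=> f_gt0; elim: s => //= x s; have := f_gt0 x; lia. Qed.

Lemma In_zip (A B : Type) (s : seq A) (t : seq B) (a : A) (b : B) :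
  List.In (a, b) (zip s t) -> List.In a s /\ List.In b t.
Proof.
elim: s t => [|x s IH] [|y t] //= [[<- <-]|/IH[]]; by [split; left | split; right].
Qed.

Lemma count_lt_count (T : Type) (p q : pred T) (s : seq T) x :
  subpred p q -> List.In x s -> ~~ p x -> q x -> count p s < count q s.
Proof.
move=> pq; elim: s => //= y s IH [<- /negbTE-> ->|xs px qx].
  by rewrite ltnS sub_count.
have lt := IH xs px qx; case py: (p y); first by rewrite (pq _ py) ltn_add2l.
by rewrite add0n ltn_addl.
Qed.

Lemma size_list_prod (A B : Type) (s : seq A) (t : seq B) :
  size (List.list_prod s t) = size s * size t.
Proof. exact: List.length_prod. Qed.

(** * De Bruijn substitution *)

Lemma ty_nested_ind (P : ty -> Prop) :
  P TEnd -> (forall n, P (TVar n)) -> (forall t, P t -> P (TRec t)) ->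
  (forall ts s, (forall t, List.In t ts -> P t) -> P s -> P (TIn ts s)) ->
  (forall ts s, (forall t, List.In t ts -> P t) -> P s -> P (TOut ts s)) ->
  (forall bs, (forall p, List.In p bs -> P p.2) -> P (TBra bs)) ->
  (forall bs, (forall p, List.In p bs -> P p.2) -> P (TSel bs)) ->
  forall t, P t.
Proof.
move=> PEnd PVar PRec PIn POut PBra PSel; fix IH 1 => -[|n|t|ts s|ts s|bs|bs].
- exact: PEnd.
- exact: PVar.
- exact/PRec/IH.
- apply: PIn (IH s); elim: ts => [|t ts IHts] x; [case | case=> [<-|]];
    [exact: IH | exact: IHts].
- apply: POut (IH s); elim: ts => [|t ts IHts] x; [case | case=> [<-|]];
    [exact: IH | exact: IHts].
- apply: PBra; elim: bs => [|p bs IHbs] x; [case | case=> [<-|]];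
    [exact: IH | exact: IHbs].
- apply: PSel; elim: bs => [|p bs IHbs] x; [case | case=> [<-|]];
    [exact: IH | exact: IHbs].
Qed.

Ltac congr_maps IHs :=
  rewrite -!map_comp; f_equal;
  first [apply: map_ext_In | apply: map_id_In] => x /IHs /= -> //.
Ltac congr_pair_maps IHs :=
  rewrite -!map_comp; f_equal;
  first [apply: map_ext_In | apply: map_id_In] => -[l x] /IHs /= -> //.

Ltac var_split := repeat (case: eqP => /= ? || case: ifP => /= ?).
Ltac var_close := first [done | exfalso; lia | congr TVar; lia].

Lemma lift_lift t c j : c <= j -> lift j.+1 (lift c t) = lift c (lift j t).
Proof.
elim/ty_nested_ind: t c j => [|n|t IH|ts s IHts IH|ts s IHts IH|bs IHbs|bs IHbs] c j cj /=.
- by [].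
- by var_split; var_close.
- by rewrite IH.
- by rewrite IH //; congr_maps IHts.
- by rewrite IH //; congr_maps IHts.
- by congr_pair_maps IHbs.
- by congr_pair_maps IHbs.
Qed.

Lemma subst_liftK t c u : subst c u (lift c t) = t.
Proof.
elim/ty_nested_ind: t c u => [|n|t IH|ts s IHts IH|ts s IHts IH|bs IHbs|bs IHbs] c u /=.
- by [].
- by var_split; var_close.
- by rewrite IH.
- by rewrite IH; congr_maps IHts.
- by rewrite IH; congr_maps IHts.
- by congr_pair_maps IHbs.
- by congr_pair_maps IHbs.
Qed.

Lemma subst_lift t c i u :
  c <= i -> subst i.+1 (lift c u) (lift c t) = lift c (subst i u t).
Proof.
elim/ty_nested_ind: t c i u
  => [|n|t IH|ts s IHts IH|ts s IHts IH|bs IHbs|bs IHbs] c i u ci /=.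
- by [].
- by var_split; var_close.
- by rewrite -IH // lift_lift.
- by rewrite IH //; congr_maps IHts.
- by rewrite IH //; congr_maps IHts.
- by congr_pair_maps IHbs.
- by congr_pair_maps IHbs.
Qed.

Lemma subst_subst t j i u v : j <= i ->
  subst i u (subst j v t) = subst j (subst i u v) (subst i.+1 (lift j u) t).
Proof.
elim/ty_nested_ind: t j i u v
  => [|n|t IH|ts s IHts IH|ts s IHts IH|bs IHbs|bs IHbs] j i u v ji /=.
- by [].
- by var_split; rewrite ?subst_liftK; var_close.
- by rewrite IH // subst_lift // lift_lift.
- by rewrite IH //; congr_maps IHts.
- by rewrite IH //; congr_maps IHts.
- by congr_pair_maps IHbs.
- by congr_pair_maps IHbs.
Qed.

(** * Components and the subterm closure *)

Definition is_var (t : ty) : bool := if t is TVar _ then true else false.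

Definition components (t : ty) : seq ty :=
  match t with
  | TEnd | TVar _ => [::]
  | TRec t' => [:: unfold_body t']
  | TIn ts s | TOut ts s => ts ++ [:: s]
  | TBra bs | TSel bs => map snd bs
  end.

Definition comp_closed (L : seq ty) : Prop :=
  forall S X, List.In S L -> List.In X (components S) -> List.In X L.

Lemma comp_closed_cat L1 L2 :
  comp_closed L1 -> comp_closed L2 -> comp_closed (L1 ++ L2).
Proof.
move=> cl1 cl2 S X /List.in_app_iff[S1|S2] XS; apply/List.in_app_iff.
  by left; apply: cl1 XS.
by right; apply: cl2 XS.
Qed.

Lemma components_subst k u t : ~~ is_var t ->
  components (subst k u t) = map (subst k u) (components t).
Proof.
case: t => //= [t|ts s|ts s|bs|bs] _; rewrite ?map_cat -?map_comp //.
by rewrite /unfold_body (subst_subst _ _ _ (leq0n k)).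
Qed.

Lemma In_components_subst k u t X :
  List.In X (components (subst k u t)) ->
  List.In X (components u) \/ exists2 Y, List.In Y (components t) & X = subst k u Y.
Proof.
case: (boolP (is_var t)) => [|t_nvar]; last first.
  by rewrite components_subst // => /List.in_map_iff[Y [<- Yt]]; right; exists Y.
by case: t => // n _ /=; var_split => // Xu; left.
Qed.

Lemma size_components_subst k u t :
  size (components (subst k u t)) <= maxn (size (components t)) (size (components u)).
Proof.
case: (boolP (is_var t)) => [|t_nvar].
  by case: t => // n _ /=; var_split; rewrite ?leq_maxr.
by rewrite components_subst // size_map leq_maxl.
Qed.

Lemma ty_components_ind (P : ty -> Prop) :
  (forall t, P t -> P (TRec t)) ->
  (forall t, ~~ is_rec t -> (forall x, List.In x (components t) -> P x) -> P t) ->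
  forall t, P t.
Proof.
move=> PRec PStruct;
  elim/ty_nested_ind => [|n|t IH|ts s IHts IH|ts s IHts IH|bs IHbs|bs IHbs].
- by apply: PStruct.
- by apply: PStruct.
- exact: PRec.
- by apply: PStruct => // x /List.in_app_iff[/IHts|[<-|]].
- by apply: PStruct => // x /List.in_app_iff[/IHts|[<-|]].
- by apply: PStruct => // x /List.in_map_iff[p [<- /IHbs]].
- by apply: PStruct => // x /List.in_map_iff[p [<- /IHbs]].
Qed.

Lemma size_ty_gt0 t : 0 < size_ty t.
Proof. by case: t. Qed.

Lemma size_ty_struct t : ~~ is_rec t ->
  size_ty t = (sumn (map size_ty (components t))).+1.
Proof.
by case: t => //= [ts s|ts s|bs|bs] _;
  rewrite ?map_cat ?sumn_cat -?map_comp /= ?addn0 add1n ?addnA.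
Qed.

Lemma size_ty_components_lt t x : ~~ is_rec t ->
  List.In x (components t) -> size_ty x < size_ty t.
Proof. by move=> t_nrec /(In_leq_sumn size_ty); rewrite (size_ty_struct t_nrec) ltnS. Qed.

Lemma size_components_lt t : size (components t) < size_ty t.
Proof.
case: (boolP (is_rec t)) => [|t_nrec].
  by case: t => //= t _; rewrite ltnS size_ty_gt0.
by rewrite size_ty_struct // ltnS size_leq_sumn // => x; apply: size_ty_gt0.
Qed.

Fixpoint subterms (t : ty) : seq ty :=
  match t with
  | TEnd | TVar _ => [:: t]
  | TRec t' => t :: map (subst 0 t) (subterms t')
  | TIn ts s | TOut ts s => t :: flatten (map subterms ts) ++ subterms s
  | TBra bs | TSel bs => t :: flatten (map (fun p => subterms p.2) bs)
  end.

Lemma subterms_struct t : ~~ is_rec t ->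
  subterms t = t :: flatten (map subterms (components t)).
Proof.
case: t => //= [ts s|ts s|bs|bs] _; rewrite ?map_cat ?flatten_cat /= ?cats0 //.
all: by rewrite -map_comp.
Qed.

Lemma subterms_self t : List.In t (subterms t).
Proof. by case: t; left. Qed.

Lemma size_subterms t : size (subterms t) <= size_ty t.
Proof.
elim/ty_components_ind: t => [t IH|t t_nrec IH]; first by rewrite /= size_map.
rewrite subterms_struct // size_ty_struct //= ltnS size_flatten /shape -map_comp.
exact: leq_sumn_map.
Qed.

Lemma subterms_closed t : comp_closed (subterms t).
Proof.
elim/ty_components_ind: t => [t IH|t t_nrec IH] S X.
  have unfold_in : List.In (unfold_body t) (subterms (TRec t)).
    by right; apply: (List.in_map (subst 0 (TRec t))); apply: subterms_self.
  move=> [<-|/List.in_map_iff[S' [<- S't]]]; first by case=> [<-|].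
  case/In_components_subst=> [[<-|//]|[Y YS' ->]]; first exact: unfold_in.
  by right; apply/List.in_map/(IH _ _ S't YS').
rewrite subterms_struct // => -[<- Xt|/In_flatten_map[y yt Sy] XS];
  right; apply/In_flatten_map.
  by exists X; last exact: subterms_self.
by exists y; last exact: IH Sy XS.
Qed.

Lemma components_subterms_lt t S :
  List.In S (subterms t) -> size (components S) < size_ty t.
Proof.
elim/ty_components_ind: t S => [t IH|t t_nrec IH] S.
  move=> [<-|/List.in_map_iff[S' [<- S't]]]; first exact: size_components_lt.
  apply: leq_ltn_trans (size_components_subst _ _ _) _.
  by rewrite /= gtn_max add1n !ltnS size_ty_gt0 ltnW ?IH.
rewrite subterms_struct // => -[<-|/In_flatten_map[y yt Sy]].
  exact: size_components_lt.
exact: ltn_trans (IH _ yt _ Sy) (size_ty_components_lt t_nrec yt).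
Qed.

(** * Premises and ranks *)

Lemma struct_premises_components A B ps a b :
  struct_premises A B = Some ps -> List.In (a, b) ps ->
  List.In a (components A ++ components B) /\ List.In b (components A ++ components B).
Proof.
case: A B => [|n|t|ts v|ts v|ss|ss] [|n'|t'|us w|us w|ss'|ss'] //=; try case: ifP => // _.
all: case=> <- //; rewrite !List.in_app_iff /=.
1,2: by case=> [H|[[<- <-]|[]]]; first case: (In_zip H); auto.
all: by move=> H; case: (In_zip H); auto.
Qed.

Lemma size_struct_premises A B ps :
  struct_premises A B = Some ps -> size ps <= size (components A).
Proof.
case: A B => [|n|t|ts v|ts v|ss|ss] [|n'|t'|us w|us w|ss'|ss'] //=; try case: ifP => // _.
all: by case=> <- //; rewrite ?size_cat size_zip /= ?leq_add2r ?geq_minl ?geq_minr.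
Qed.

Definition height (A B : ty) : nat := maxn (size_ty A) (size_ty B).

Lemma height_attained (C : seq ty) A B : List.In A C -> List.In B C ->
  exists2 x, List.In x C & size_ty x = height A B.
Proof.
rewrite /height => AC BC; case: (leqP (size_ty A) (size_ty B)) => AB.
  by exists B => //; lia.
by exists A => //; lia.
Qed.

Definition rank (C : seq ty) (A B : ty) : nat :=
  count (fun x => size_ty x < height A B) C.

Lemma rank_lt_size C A B : List.In A C -> List.In B C -> rank C A B < size C.
Proof.
move=> AC BC; have [x xC x_height] := height_attained AC BC.
by rewrite -count_predT (@count_lt_count _ _ _ _ x) //= x_height ltnn.
Qed.

Lemma rank_lt C A B a b : List.In a C -> List.In b C ->
  height a b < height A B -> rank C a b < rank C A B.
Proof.
move=> aC bC ab_lt; have [x xC x_height] := height_attained aC bC.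
apply: (@count_lt_count _ _ _ _ x) => //=; rewrite ?x_height ?ltnn //.
by move=> y /= /ltn_trans; apply.
Qed.

Definition rec_pairs (C : seq ty) : seq (ty * ty) :=
  List.filter (fun p => is_rec p.1 || is_rec p.2) (List.list_prod C C).

Lemma size_rec_pairs C : size (rec_pairs C) <= size C ^ 2.
Proof. by rewrite size_filter -mulnn -size_list_prod count_size. Qed.

Lemma size_rec_pairs_lt C A : List.In A C -> ~~ is_rec A -> size (rec_pairs C) < size C ^ 2.
Proof.
move=> AC A_nrec; rewrite size_filter -mulnn -size_list_prod -count_predT.
by apply: (@count_lt_count _ _ _ _ (A, A)) => //=; [apply: List.in_prod | rewrite orbb].
Qed.

Lemma height_components_lt A B x : ~~ is_rec A -> ~~ is_rec B ->
  List.In x (components A ++ components B) -> size_ty x < height A B.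
Proof.
move=> A_nrec B_nrec.
case/List.in_app_iff=> [/(size_ty_components_lt A_nrec)|/(size_ty_components_lt B_nrec)].
all: by rewrite /height leq_max => ->; rewrite ?orbT.
Qed.

Lemma height_premise_lt A B ps a b : ~~ is_rec A -> ~~ is_rec B ->
  struct_premises A B = Some ps -> List.In (a, b) ps -> height a b < height A B.
Proof.
move=> A_nrec B_nrec ps_eq /(struct_premises_components ps_eq)[aAB bAB].
by rewrite /height gtn_max !height_components_lt.
Qed.

(** * Cost of a run *)

Section Cost.

Variables (C : seq ty) (n : nat).
Hypothesis C_closed : comp_closed C.
Hypothesis C_width : forall S, List.In S C -> size (components S) < n.
Hypothesis n_gt1 : 1 < n.

Definition admissible (Sigma : seq (ty * ty)) : Prop :=
  List.NoDup Sigma /\ List.incl Sigma (rec_pairs C).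

(* A judgement with a recursive side is charged no rank: its single premise is
   processed under a longer Sigma. *)
Definition budget (Sigma : seq (ty * ty)) (A B : ty) : nat :=
  size C * (size (rec_pairs C) - size Sigma) +
  (if is_rec A || is_rec B then 0 else rank C A B).

Definition runs_within (Sigma : seq (ty * ty)) (A B : ty) (e : nat) : Prop :=
  exists b k, exec Sigma A B b k /\ k <= n ^ e.

Lemma admissible_nil : admissible [::].
Proof. by split; [constructor | apply: List.incl_nil_l]. Qed.

Lemma admissible_cons Sigma A B :
  admissible Sigma -> ~ List.In (A, B) Sigma -> List.In A C -> List.In B C ->
  is_rec A || is_rec B -> admissible ((A, B) :: Sigma).
Proof.
move=> [nodup incl] notin AC BC AB_rec; split; first by constructor.
by apply: List.incl_cons => //; apply/List.filter_In; split=> //; apply: List.in_prod.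
Qed.

Lemma size_admissible Sigma : admissible Sigma -> size Sigma <= size (rec_pairs C).
Proof. by case=> nodup incl; apply/leP/List.NoDup_incl_length. Qed.

Lemma budget_cons_lt Sigma A B A' B' :
  admissible ((A, B) :: Sigma) -> List.In A' C -> List.In B' C ->
  budget ((A, B) :: Sigma) A' B' < budget Sigma A B.
Proof.
move=> /size_admissible /= Sigma_lt A'C B'C; have := rank_lt_size A'C B'C.
rewrite /budget -(subnSK Sigma_lt) mulnS /=.
by case: ifP => _; case: ifP => _; lia.
Qed.

Lemma premise_budget_lt Sigma A B ps a b :
  ~~ is_rec A -> ~~ is_rec B -> List.In A C -> List.In B C ->
  struct_premises A B = Some ps -> List.In (a, b) ps ->
  [/\ List.In a C, List.In b C & budget Sigma a b < budget Sigma A B].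
Proof.
move=> A_nrec B_nrec AC BC ps_eq ab.
have [aAB bAB] := struct_premises_components ps_eq ab.
have inC x : List.In x (components A ++ components B) -> List.In x C.
  by case/List.in_app_iff; [apply: C_closed AC | apply: C_closed BC].
have aC := inC _ aAB; have bC := inC _ bAB; split=> //.
have := rank_lt aC bC (height_premise_lt A_nrec B_nrec ps_eq ab).
by rewrite /budget (negbTE A_nrec) (negbTE B_nrec) /=; case: ifP => _; lia.
Qed.

Lemma succ_leq_expn e1 e2 k : e1 < e2 -> k <= n ^ e1 -> k.+1 <= n ^ e2.
Proof.
move=> e12 k_le; apply: leq_trans (_ : n ^ e1.+1 <= _); last by rewrite leq_exp2l.
have := expn_gt0 n e1; rewrite expnS (ltnW n_gt1) /=; nia.
Qed.

Lemma succ_leq_expnS m e k : m < n -> k <= m * n ^ e -> k.+1 <= n ^ e.+1.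
Proof. by have := expn_gt0 n e; rewrite expnS (ltnW n_gt1) /=; nia. Qed.

Lemma runs_within_mono Sigma A B e1 e2 :
  e1 <= e2 -> runs_within Sigma A B e1 -> runs_within Sigma A B e2.
Proof.
move=> e12 [b [k [ex k_le]]]; exists b, k; split=> //.
by apply: leq_trans k_le _; rewrite leq_exp2l.
Qed.

Lemma runs_within_step Sigma A B Sigma' A' B' e' e :
  e' < e -> runs_within Sigma' A' B' e' ->
  (forall b k, exec Sigma' A' B' b k -> exec Sigma A B b k.+1) ->
  runs_within Sigma A B e.
Proof.
move=> e'_lt [b [k [ex k_le]]] step; exists b, k.+1; split; first exact: step.
exact: succ_leq_expn e'_lt k_le.
Qed.

Lemma execs_within Sigma ps e :
  (forall a b, List.In (a, b) ps -> runs_within Sigma a b e) ->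
  exists b k, execs Sigma ps b k /\ k <= size ps * n ^ e.
Proof.
elim: ps => [|[a b] ps IH] within; first by exists true, 0; split=> //; constructor.
have [b1 [k1 [ex1 k1_le]]] := within a b (or_introl erefl).
have [b2 [k2 [ex2 k2_le]]] := IH (fun a' b' ab' => within a' b' (or_intror ab')).
by exists (b1 && b2), (k1 + k2); split; [constructor | rewrite mulSn leq_add].
Qed.

Lemma runs_within_struct Sigma A B ps e :
  ~ List.In (A, B) Sigma -> ~~ is_rec A -> ~~ is_rec B -> List.In A C ->
  struct_premises A B = Some ps ->
  (forall a b, List.In (a, b) ps -> exists2 e', e' < e & runs_within Sigma a b e') ->
  runs_within Sigma A B e.
Proof.
move=> notin A_nrec B_nrec AC ps_eq within.
have [b [k [ex k_le]]] : exists b k, execs Sigma ps b k /\ k <= size ps * n ^ e.-1.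
  apply: execs_within => a c /within[e' e'_lt]; apply: runs_within_mono; lia.
exists b, k.+1; split; first exact: ExStruct ex.
case: e within k_le => [|e] within k_le.
  case: ps {ps_eq ex} within k_le => [_|[a c] ps /(_ a c (or_introl erefl))[]//].
  by rewrite mul0n leqn0 => /eqP->.
apply: succ_leq_expnS k_le; exact: leq_ltn_trans (size_struct_premises ps_eq) (C_width AC).
Qed.

Lemma exec_within_budget Sigma A B :
  admissible Sigma -> List.In A C -> List.In B C ->
  runs_within Sigma A B (budget Sigma A B).
Proof.
have [m] := ubnP (budget Sigma A B); elim: m Sigma A B => // m IH Sigma A B.
rewrite ltnS => budget_le adm AC BC.
have IHlt Sigma' A' B' : budget Sigma' A' B' < budget Sigma A B ->
    admissible Sigma' -> List.In A' C -> List.In B' C ->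
    runs_within Sigma' A' B' (budget Sigma' A' B').
  by move=> lt; apply: IH; apply: leq_trans lt budget_le.
clear IH budget_le.
(* [ty] has no decidable equality here: whether AS-Assump applies is decided classically. *)
have [inSigma|notin] := classic (List.In (A, B) Sigma).
  by exists true, 1; split; [exact: ExAssump | rewrite expn_gt0 ltnW].
have push : is_rec A || is_rec B -> admissible ((A, B) :: Sigma).
  exact: admissible_cons.
case A_rec: (is_rec A).
  case: A A_rec AC notin push IHlt => // T _ AC notin push IHlt.
  have UC : List.In (unfold_body T) C by apply: C_closed AC _; left.
  have lt := budget_cons_lt (push isT) UC BC.
  apply: runs_within_step lt (IHlt _ _ _ lt (push isT) UC BC) _ => b k.
  exact: ExRecL.
case B_rec: (is_rec B).
  case: B B_rec BC notin push IHlt => // U _ BC notin push IHlt.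
  have UC : List.In (unfold_body U) C by apply: C_closed BC _; left.
  have adm' := push (orbT _).
  have lt := budget_cons_lt adm' AC UC.
  apply: runs_within_step lt (IHlt _ _ _ lt adm' AC UC) _ => b k.
  by apply: ExRecR; rewrite ?A_rec.
case ps_eq: (struct_premises A B) => [ps|]; last first.
  exists false, 1; split; last by rewrite expn_gt0 ltnW.
  by apply: ExFail; rewrite ?A_rec ?B_rec.
apply: (runs_within_struct notin _ _ AC ps_eq); rewrite ?A_rec ?B_rec // => a b ab.
have [aC bC lt] := premise_budget_lt Sigma (negbT A_rec) (negbT B_rec) AC BC ps_eq ab.
by exists (budget Sigma a b); last exact: IHlt lt adm aC bC.
Qed.

End Cost.

Lemma budget_nil_le C A B : List.In A C -> List.In B C -> budget C [::] A B <= size C ^ 3.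
Proof.
move=> AC BC; rewrite /budget subn0 expnS.
case: (boolP (is_rec A || is_rec B)) => [_|].
  by rewrite addn0 leq_mul2l size_rec_pairs orbT.
rewrite negb_or => /andP[A_nrec _].
have := size_rec_pairs_lt AC A_nrec; have := rank_lt_size AC BC; nia.
Qed.

Theorem mainTheorem5 :
  exists c N : nat, forall T U : ty,
    closed_ty T -> closed_ty U -> N <= size_ty T + size_ty U ->
    exists (b : bool) (k : nat),
      exec [::] T U b k /\
      k <= c * (size_ty T + size_ty U) ^ ((size_ty T + size_ty U) ^ 3).
Proof.
exists 1, 0 => T U _ _ _; rewrite mul1n.
set n := size_ty T + size_ty U; set C := subterms T ++ subterms U.
have C_closed : comp_closed C := comp_closed_cat (@subterms_closed T) (@subterms_closed U).
have C_width S : List.In S C -> size (components S) < n.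
  by case/List.in_app_iff => /components_subterms_lt; rewrite /n; lia.
have n_gt1 : 1 < n by rewrite /n; have := size_ty_gt0 T; have := size_ty_gt0 U; lia.
have TC : List.In T C by apply/List.in_app_iff; left; apply: subterms_self.
have UC : List.In U C by apply/List.in_app_iff; right; apply: subterms_self.
have C_size : size C <= n by rewrite size_cat leq_add ?size_subterms.
have [b [k [ex k_le]]] :=
  exec_within_budget C_closed C_width n_gt1 (admissible_nil C) TC UC.
exists b, k; split=> //; apply: leq_trans k_le _; rewrite leq_exp2l //.
by apply: leq_trans (budget_nil_le TC UC) _; rewrite leq_exp2r.
Qed.
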